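(* Let $r\ge 1$ and let $M=(v_1,\dots,v_n)$ be a finite list (repetitions allowed) of nonzero vectors of $\mathbb{F}_2^r$ generating $\mathbb{F}_2^r$. Let $c_1(G)$ be the largest invariant factor (the exponent) of the sandpile group $K(G)$ of $G=G(\mathbb{F}_2^r,M)$. Then $$v_2(c_1(G))\le \lfloor \log_2 n\rfloor + r-1.$$
   Context: The Cayley graph $G=G(\mathbb{F}_2^r,M)$ has vertex set $\mathbb{F}_2^r$; its Laplacian $L(G)$ is the $2^r\times 2^r$ integer matrix indexed by $\mathbb{F}_2^r$ with $L(G)_{u,u}=n$ and $L(G)_{u,w}=-\#\{i: u+v_i=w\}$ for $u\neq w$. Then $\operatorname{coker}L(G)\cong \mathbb{Z}\oplus K(G)$ with $K(G)$ finite abelian (the sandpile group). For an integer $x\neq 0$, $v_2(x)$ is the largest $m$ with $2^m\mid x$. *)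

From mathcomp Require Import all_boot all_order all_algebra.
Set Implicit Arguments.
Unset Strict Implicit.
Unset Printing Implicit Defensive.
Import Order.TTheory GRing.Theory Num.Theory.
Local Open Scope ring_scope.

Notation F2vec r := 'rV['F_2]_r.

Definition cayley_laplacian (r n : nat) (v : 'I_n -> F2vec r)
    (u w : F2vec r) : int :=
  if u == w then (n%:Z)
  else - ((#|[set i : 'I_n | u + v i == w]|)%:Z).

Definition in_laplacian_image (r n : nat) (v : 'I_n -> F2vec r)
    (x : F2vec r -> int) : Prop :=
  exists y : F2vec r -> int,
    forall u, x u = \sum_(w : F2vec r) cayley_laplacian v u w * y w.

(* the class of x in coker L(G) is a torsion element, i.e. lies in K(G) *)
Definition coker_torsion (r n : nat) (v : 'I_n -> F2vec r)
    (x : F2vec r -> int) : Prop :=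
  exists k : nat, (0 < k)%N /\ in_laplacian_image v (fun u => k%:Z * x u).

Definition kills_sandpile (r n : nat) (v : 'I_n -> F2vec r) (c : nat) : Prop :=
  forall x, coker_torsion v x -> in_laplacian_image v (fun u => c%:Z * x u).

(* c is the exponent (= largest invariant factor) of K(G) *)
Definition sandpile_exponent (r n : nat) (v : 'I_n -> F2vec r) (c : nat) : Prop :=
  [/\ (0 < c)%N, kills_sandpile v c
    & forall c', (0 < c')%N -> kills_sandpile v c' -> (c <= c')%N].

From Stdlib Require Import Classical Wf_nat.
From mathcomp Require Import all_boot all_order all_algebra.
From mathcomp Require Import ring zify.
Set Implicit Arguments.
Unset Strict Implicit.
Unset Printing Implicit Defensive.
Import GRing.Theory.
Local Open Scope ring_scope.

(* The characters chi a u = (-1)^<a,u> of F_2^r diagonalise the Laplacian: L maps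
   the 0/1 function u |-> 1 - <a,u> to weight a * chi a, where weight a counts the
   v_i with <a,v_i> = 1; since the v_i span, 1 <= weight a <= n for a <> 0.  Torsion
   classes of coker L have coordinate sum 0, and expanding such an x in characters
   shows that 2^(r-1) l x lies in the image of L as soon as every weight divides l.
   Taking l = 2^(floor (log2 n)) * (odd part of n!), the exponent divides 2^(r-1) l. *)

Lemma F2_0or1 (x : 'F_2) : x = 0 \/ x = 1.
Proof. by case: x => [[|[|m]]] //= lt; [left | right]; apply: val_inj. Qed.

Lemma F2_neq0D (x y : 'F_2) :
  ((x + y != 0)%:R : int) =
  (x != 0)%:R + (y != 0)%:R - 2 * (x != 0)%:R * (y != 0)%:R.
Proof. by case: (F2_0or1 x) => ->; case: (F2_0or1 y) => ->. Qed.

Definition bdot r (a u : 'rV['F_2]_r) : 'F_2 := (a *m u^T) 0 0.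

Definition bdotz r (a u : 'rV['F_2]_r) : int := (bdot a u != 0)%:R.

Definition chi r (a u : 'rV['F_2]_r) : int := 1 - 2 * bdotz a u.

Section BilinearForm.

Variable r : nat.
Implicit Types a b u w : 'rV['F_2]_r.

Lemma bdotC a u : bdot a u = bdot u a.
Proof. by rewrite /bdot -[u *m a^T]trmxK trmx_mul trmxK [RHS]mxE. Qed.

Lemma bdotDl a b u : bdot (a + b) u = bdot a u + bdot b u.
Proof. by rewrite /bdot mulmxDl mxE. Qed.

Lemma bdotDr a u w : bdot a (u + w) = bdot a u + bdot a w.
Proof. by rewrite bdotC bdotDl !(bdotC a). Qed.

Lemma bdotNr a u : bdot a (- u) = - bdot a u.
Proof. by rewrite /bdot linearN /= mulmxN mxE. Qed.

Lemma bdot0l u : bdot 0 u = 0.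
Proof. by rewrite /bdot mul0mx mxE. Qed.

Lemma exists_bdot1 u : u != 0 -> exists b, bdot b u = 1.
Proof.
move=> u_neq0; have [j uj_neq0] : exists j, u 0 j != 0.
  apply/existsP; apply: contraR u_neq0 => /existsPn u0.
  by apply/eqP/rowP => j; rewrite mxE; apply/eqP/negbNE/u0.
exists (delta_mx 0 j); rewrite /bdot -rowE !mxE.
by case: (F2_0or1 (u 0 j)) uj_neq0 => ->; rewrite ?eqxx.
Qed.

Lemma bdotzDl a b u :
  bdotz (a + b) u = bdotz a u + bdotz b u - 2 * bdotz a u * bdotz b u.
Proof. by rewrite /bdotz bdotDl F2_neq0D. Qed.

Lemma bdotzDr a u w :
  bdotz a (u + w) = bdotz a u + bdotz a w - 2 * bdotz a u * bdotz a w.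
Proof. by rewrite /bdotz bdotDr F2_neq0D. Qed.

Lemma bdotzNr a u : bdotz a (- u) = bdotz a u.
Proof. by rewrite /bdotz bdotNr oppr_eq0. Qed.

Lemma bdotz0l u : bdotz 0 u = 0.
Proof. by rewrite /bdotz bdot0l eqxx. Qed.

Lemma bdotz0r a : bdotz a 0 = 0.
Proof. by rewrite /bdotz bdotC bdot0l eqxx. Qed.

Lemma sum_chi u : \sum_a chi a u = (u == 0)%:R * 2 ^+ r.
Proof.
have [->|u_neq0] := eqVneq u 0.
  under eq_bigr do rewrite /chi bdotz0r mulr0 subr0.
  by rewrite sumr_const card_mx card_Fp // mul1n mul1r -natrX.
have [b bu1] := exists_bdot1 u_neq0.
set S := \sum_a _; suff S_opp : S = - S by rewrite mul0r; lia.
(* translating by b flips the sign of every character value *)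
rewrite {1}/S (reindex_inj (addIr b)) /= -sumrN; apply: eq_bigr => a _.
have bu : bdotz b u = 1 by rewrite /bdotz bu1 oner_eq0.
by rewrite /chi bdotzDl bu; ring.
Qed.

Lemma sum_bdotz_chi w u : (0 < r)%N ->
  \sum_a bdotz a w * chi a u = 2 ^+ r.-1 * ((u == 0)%:R - (w == u)%:R).
Proof.
move=> r_gt0.
have twice : 2 * \sum_a bdotz a w * chi a u = \sum_a chi a u - \sum_a chi a (w - u).
  rewrite mulr_sumr -sumrB; apply: eq_bigr => a _.
  by rewrite /chi bdotzDr bdotzNr; ring.
have r_pred : (2 : int) ^+ r = 2 * 2 ^+ r.-1 by rewrite -exprS prednK.
rewrite !sum_chi subr_eq0 r_pred in twice.
by apply: (@mulfI _ 2) => //; rewrite twice; ring.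
Qed.

Lemma bdotz_inversion (x : 'rV['F_2]_r -> int) u : (0 < r)%N ->
  \sum_w x w = 0 ->
  \sum_a (\sum_w bdotz a w * x w) * chi a u = - 2 ^+ r.-1 * x u.
Proof.
move=> r_gt0 sum_x0.
transitivity (\sum_w x w * \sum_a bdotz a w * chi a u).
  under eq_bigr do rewrite mulr_suml.
  rewrite exchange_big; apply: eq_bigr => w _; rewrite mulr_sumr.
  by apply: eq_bigr => a _; ring.
under eq_bigr do rewrite sum_bdotz_chi //.
transitivity (\sum_w (2 ^+ r.-1 * (u == 0)%:R * x w - 2 ^+ r.-1 * ((w == u)%:R * x w))).
  by apply: eq_bigr => w _; ring.
rewrite sumrB -!mulr_sumr sum_x0 (bigD1 u) //= eqxx big1 => [|w /negPf ->].
  by rewrite mul1r; ring.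
by rewrite mul0r.
Qed.

End BilinearForm.

Lemma card_set_sum (T : finType) (P : pred T) :
  (#|[set t | P t]|)%:Z = \sum_t (P t)%:R.
Proof.
rewrite -sum1_card -natz natr_sum big_mkcond; apply: eq_bigr => t _.
by rewrite inE; case: (P t).
Qed.

Section CayleyLaplacian.

Variables (r n : nat) (v : 'I_n -> 'rV['F_2]_r).
Hypothesis v_neq0 : forall i, v i != 0.

Local Notation L := (cayley_laplacian v).

Lemma laplacianE (g : 'rV['F_2]_r -> int) u :
  \sum_w L u w * g w = n%:Z * g u - \sum_i g (u + v i).
Proof.
have no_loop : #|[set i | u + v i == u]| = 0%N.
  apply/eqP; rewrite cards_eq0; apply/eqP/setP => i.
  by rewrite !inE -{2}[u]addr0 (inj_eq (addrI u)) (negbTE (v_neq0 i)).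
have nbrs : \sum_i g (u + v i) = \sum_(w | w != u) (#|[set i | u + v i == w]|)%:Z * g w.
  transitivity (\sum_w (#|[set i | u + v i == w]|)%:Z * g w); last first.
    by rewrite (bigD1 u) //= no_loop mul0r add0r.
  under [RHS]eq_bigr do rewrite card_set_sum mulr_suml.
  rewrite exchange_big; apply: eq_bigr => i _.
  rewrite (bigD1 (u + v i)) //= eqxx mul1r big1 ?addr0 // => w.
  by rewrite eq_sym => /negPf ->; rewrite mul0r.
rewrite nbrs (bigD1 u) //= {1}/cayley_laplacian eqxx -sumrN; congr (_ + _).
by apply: eq_bigr => w w_neq_u; rewrite /cayley_laplacian eq_sym (negbTE w_neq_u) mulNr.
Qed.

Lemma sum_laplacian (y : 'rV['F_2]_r -> int) : \sum_u \sum_w L u w * y w = 0.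
Proof.
under eq_bigr do rewrite laplacianE.
have shift i : \sum_u y (u + v i) = \sum_u y u.
  by rewrite (reindex_inj (addIr (- v i))); apply: eq_bigr => u _; rewrite subrK.
rewrite sumrB exchange_big /=; under [X in _ - X]eq_bigr do rewrite shift.
by rewrite -mulr_sumr sumr_const card_ord -mulr_natl natz subrr.
Qed.

Lemma coker_torsion_sum x : coker_torsion v x -> \sum_u x u = 0.
Proof.
move=> [k [k_gt0 [y Ly]]].
have : k%:Z * \sum_u x u = 0 by rewrite mulr_sumr (eq_bigr _ (fun u _ => Ly u)) sum_laplacian.
by move/eqP; rewrite mulf_eq0 eqz_nat gtn_eqF //= => /eqP.
Qed.

(* [2 * weight a] is the eigenvalue of the Laplacian on the character [chi a]. *)
Definition weight (a : 'rV['F_2]_r) : nat := \sum_i (bdot a (v i) != 0%R : nat).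

Lemma weight_le a : (weight a <= n)%N.
Proof.
rewrite /weight -[X in (_ <= X)%N]card_ord -sum1_card.
by apply: leq_sum => i _; apply: leq_b1.
Qed.

Lemma weight_gt0 a : row_full (\matrix_(i < n) v i) -> a != 0 -> (0 < weight a)%N.
Proof.
move=> /row_fullP [B B_inv] a_neq0; rewrite lt0n; apply: contraNN a_neq0 => /eqP w0.
have orth i : bdot a (v i) = 0.
  apply/eqP/negbNE/negP => a_vi; move: w0.
  by rewrite /weight (bigD1 i) //= a_vi.
have M_aT : \matrix_(i < n) v i *m a^T = 0.
  apply/matrixP => i j; rewrite ord1 !mxE -[RHS](orth i) bdotC /bdot mxE.
  by apply: eq_bigr => k _; rewrite !mxE.
have : a^T = 0 by rewrite -[a^T]mul1mx -B_inv -mulmxA M_aT mulmx0.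
by move/(congr1 trmx); rewrite trmxK trmx0 => ->.
Qed.

Lemma laplacian_bdotz a u :
  \sum_w L u w * (1 - bdotz a w) = (weight a)%:Z * chi a u.
Proof.
have -> : (weight a)%:Z = \sum_i bdotz a (v i) by rewrite /weight -natz natr_sum.
rewrite laplacianE; under eq_bigr do rewrite bdotzDr.
have -> : n%:Z = \sum_(i < n) 1 by rewrite sumr_const card_ord natz.
rewrite /chi !mulr_suml -sumrB.
by apply: eq_bigr => i _; ring.
Qed.

Lemma laplacian_image_weight_dvd (l : nat) x : (0 < r)%N ->
  (forall a, a != 0 -> (weight a %| l)%N) -> \sum_u x u = 0 ->
  in_laplacian_image v (fun u => (2 ^ r.-1 * l)%N%:Z * x u).
Proof.
move=> r_gt0 weight_dvd sum_x0.
pose X a := \sum_w bdotz a w * x w.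
pose q a := (l %/ weight a)%N%:Z.
exists (fun w => - \sum_a q a * X a * (1 - bdotz a w)) => u.
have qXw a : q a * X a * (weight a)%:Z = l%:Z * X a.
  have [->|a_neq0] := eqVneq a 0.
    by rewrite /X big1 ?mulr0 ?mul0r // => w _; rewrite bdotz0l mul0r.
  by rewrite mulrAC -PoszM divnK ?weight_dvd.
symmetry; transitivity (- \sum_a q a * X a * \sum_w L u w * (1 - bdotz a w)).
  under eq_bigr do rewrite mulrN mulr_sumr.
  rewrite sumrN exchange_big; congr (- _); apply: eq_bigr => a _; rewrite mulr_sumr.
  by apply: eq_bigr => w _; ring.
under eq_bigr do rewrite laplacian_bdotz mulrA qXw -mulrA.
have pow2 : (2 ^ r.-1)%N%:Z = 2 ^+ r.-1 :> int by rewrite -natz natrX.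
by rewrite -mulr_sumr bdotz_inversion // PoszM pow2; ring.
Qed.

End CayleyLaplacian.

Section SandpileExponent.

Variables (r n : nat) (v : 'I_n -> 'rV['F_2]_r).

Lemma laplacian_image_lincomb (f g : 'rV['F_2]_r -> int) (a b : int) :
  in_laplacian_image v f -> in_laplacian_image v g ->
  in_laplacian_image v (fun u => a * f u + b * g u).
Proof.
move=> [y Ly] [z Lz]; exists (fun w => a * y w + b * z w) => u.
by rewrite Ly Lz !mulr_sumr -big_split /=; apply: eq_bigr => w _; ring.
Qed.

Lemma kills_sandpile_gcd c1 c2 :
  kills_sandpile v c1 -> kills_sandpile v c2 -> kills_sandpile v (gcdn c1 c2).
Proof.
move=> kill1 kill2 x x_tor.
have [a [b bezout]] := Bezoutz c1%:Z c2%:Z.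
have [y Ly] := laplacian_image_lincomb a b (kill1 x x_tor) (kill2 x x_tor).
have -> : (gcdn c1 c2)%:Z = gcdz c1%:Z c2%:Z by [].
by exists y => u; rewrite -Ly -bezout; ring.
Qed.

(* Killers are closed under gcd, so the least positive one divides all the others. *)
Lemma sandpile_exponent_dvd c0 : (0 < c0)%N -> kills_sandpile v c0 ->
  exists2 c, sandpile_exponent v c & (c %| c0)%N.
Proof.
move=> c0_gt0 kill0.
pose P c := (0 < c)%N /\ kills_sandpile v c.
have [c [[[c_gt0 kill_c] c_min] _]] : has_unique_least_element le P.
  by apply: dec_inh_nat_subset_has_unique_least_element => [m|]; [apply: classic | exists c0].
have c_least c' : (0 < c')%N -> kills_sandpile v c' -> (c <= c')%N.
  by move=> c'_gt0 kill'; apply/leP/c_min.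
exists c; first by split.
have g_gt0 : (0 < gcdn c c0)%N by rewrite gcdn_gt0 c_gt0.
have c_le_g := c_least _ g_gt0 (kills_sandpile_gcd kill_c kill0).
have -> : c = gcdn c c0.
  by apply/eqP; rewrite eqn_leq c_le_g dvdn_leq ?dvdn_gcdl.
exact: dvdn_gcdr.
Qed.

End SandpileExponent.

(* Every k in [1, n] divides it: the 2-part of k is at most 2 ^ trunc_log 2 n, its odd part divides n!. *)
Definition weight_bound n := (2 ^ trunc_log 2 n * (n`!)`_(2^'))%N.

Lemma dvdn_weight_bound n k : (0 < k <= n)%N -> (k %| weight_bound n)%N.
Proof.
move=> /andP [k_gt0 k_le_n].
rewrite -(partnC 2%N k_gt0) /weight_bound; apply: dvdn_mul; last first.
  by apply: partn_dvd; [apply: fact_gt0 | apply: dvdn_fact; rewrite k_gt0].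
rewrite p_part dvdn_exp2l //; apply: leq_trans (leq_trunc_log 2%N k_le_n).
by apply: trunc_log_max => //; rewrite -p_part dvdn_leq ?dvdn_part.
Qed.

Lemma logn2_weight_bound m n : logn 2 (2 ^ m * weight_bound n) = (m + trunc_log 2 n)%N.
Proof.
rewrite /weight_bound mulnA -expnD mulnC logn_Gauss ?pfactorK //.
by have := coprime_partC 2%N 2%N (n`!); rewrite p_part (pfactorK 1).
Qed.

Unset Implicit Arguments.

Theorem mainTheorem2 (r n : nat) (v : 'I_n -> 'rV['F_2]_r) :
  (1 <= r)%N ->
  (forall i, v i != 0) ->
  row_full (\matrix_(i < n) v i) ->
  exists c : nat, sandpile_exponent v c /\
    (logn 2 c <= trunc_log 2 n + r - 1)%N.
Proof.
move=> r_gt0 v_neq0 v_full.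
set c0 := (2 ^ r.-1 * weight_bound n)%N.
have c0_gt0 : (0 < c0)%N by rewrite muln_gt0 !expn_gt0 muln_gt0 expn_gt0 part_gt0.
have kill0 : kills_sandpile v c0.
  move=> x x_tor; apply: laplacian_image_weight_dvd => // [a a_neq0|].
    by rewrite dvdn_weight_bound // weight_gt0 // weight_le.
  exact: coker_torsion_sum x_tor.
have [c c_exp c_dvd] := sandpile_exponent_dvd c0_gt0 kill0.
exists c; split=> //.
have := dvdn_leq_log 2 c0_gt0 c_dvd; rewrite logn2_weight_bound; lia.
Qed.
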